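(* Let $d\ge1$, let $\Lambda\subset\mathbb{R}^{2d}$ be a lattice, let $r>0$, and let $\Omega\subset\mathbb{R}^{2d}$ be a compact set with maximally Ahlfors regular boundary with constant $\kappa_{\partial\Omega}$. Then there exist constants $C,D$ (depending on $r$ and $\Lambda$) such that $$\#\partial^r_\Lambda\Omega\le C\,\frac{|\partial\Omega|}{\kappa_{\partial\Omega}}\Big(1+\frac{D}{|\partial\Omega|}\Big).$$
   Context: A lattice is $\Lambda=M\mathbb{Z}^{2d}$ with $M$ an invertible real $2d\times2d$ matrix. Write $n=2d$ for the ambient dimension, $\mathcal{H}^{n-1}$ for $(n-1)$-dimensional Hausdorff measure and $|\partial\Omega|=\mathcal{H}^{n-1}(\partial\Omega)$. The set $\Omega$ has maximally Ahlfors regular boundary with constant $\kappa_{\partial\Omega}>0$ if $\mathcal{H}^{n-1}(\partial\Omega\cap B(z,\varrho))\ge\kappa_{\partial\Omega}\varrho^{\,n-1}$ for every $z\in\partial\Omega$ and every $0<\varrho<|\partial\Omega|^{1/(n-1)}$. $B(z,\varrho)$ is the open ball; for $r>0$, $\partial^r_\Lambda\Omega=\Lambda\cap(\partial\Omega+B(0,r))$, and $\#$ denotes cardinality. *)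

From HB Require Import structures.
From mathcomp Require Import all_boot all_order all_algebra.
From mathcomp Require Import all_classical all_reals all_analysis.
Set Implicit Arguments. Unset Strict Implicit. Unset Printing Implicit Defensive.
Import Order.TTheory GRing.Theory Num.Theory.
Import numFieldNormedType.Exports.
Local Open Scope classical_set_scope.
Local Open Scope ring_scope.

(* Euclidean norm on R^n (the library's norm on matrices is the max norm). *)
Definition enorm (R : realType) (n : nat) (x : 'cV[R]_n) : R :=
  Num.sqrt (\sum_(i < n) x i ord0 ^+ 2).

Definition eball (R : realType) (n : nat) (z : 'cV[R]_n) (rho : R) :
  set 'cV[R]_n := [set x | enorm (x - z) < rho].

(* Topological boundary (topology of R^n; equal for all norms). *)
Definition bdry (R : realType) (n : nat) (A : set 'cV[R]_n) : set 'cV[R]_n :=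
  closure A `\` interior A.

(* Euclidean diameter, with diam(empty) = 0. *)
Definition ediam (R : realType) (n : nat) (E : set 'cV[R]_n) : \bar R :=
  ereal_sup ([set 0%E] `|` [set (enorm (x - y))%:E | x in E & y in E]).

Fixpoint unit_ball_vol (R : realType) (k : nat) : R :=
  match k with
  | 0 => 1
  | 1 => 2
  | k'.+2 => (2 * pi / k'.+2%:R) * unit_ball_vol R k'
  end.

Definition hausdorff_delta (R : realType) (n s : nat) (delta : R)
    (A : set 'cV[R]_n) : \bar R :=
  ereal_inf [set (\sum_(0 <= i <oo)
                   ((unit_ball_vol R s * (fine (ediam (E i)) / 2) ^+ s)%:E))%E
            | E in [set E : nat -> set 'cV[R]_n |
                    A `<=` \bigcup_i E i /\ forall i, (ediam (E i) <= delta%:E)%E]].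

(* s-dimensional Hausdorff measure H^s(A) = lim_{delta -> 0+} H^s_delta(A)
   = sup_{delta > 0} H^s_delta(A). *)
Definition hausdorff (R : realType) (n s : nat) (A : set 'cV[R]_n) : \bar R :=
  ereal_sup [set hausdorff_delta s delta A | delta in [set d : R | 0 < d]].

Definition bdry_measure (R : realType) (n : nat) (Om : set 'cV[R]_n) : \bar R :=
  hausdorff n.-1 (bdry Om).

Definition max_ahlfors_regular (R : realType) (n : nat) (Om : set 'cV[R]_n)
    (kappa : R) : Prop :=
  forall z, bdry Om z -> forall rho : R, 0 < rho ->
    (rho%:E < poweR (bdry_measure Om) (n.-1%:R)^-1)%E ->
    ((kappa * rho ^+ n.-1)%:E <= hausdorff n.-1 (bdry Om `&` eball z rho))%E.

Definition lattice (R : realType) (n : nat) (M : 'M[R]_n) : set 'cV[R]_n :=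
  [set x | exists k : 'cV[int]_n, x = M *m map_mx (fun z : int => z%:~R) k].

Definition bdry_lattice_pts (R : realType) (n : nat) (M : 'M[R]_n) (r : R)
    (Om : set 'cV[R]_n) : set 'cV[R]_n :=
  lattice M `&` [set x | exists2 y, bdry Om y & eball 0 r (x - y)].

(* Let K bound the number of lattice points in any ball of radius 3r.  A
   greedily chosen maximal 3r-separated family u of points of the boundary
   layer has at least a 1/K fraction of them.  Each a in u lies within r of
   some y_a in dOm, and the boundary balls dOm ∩ B(y_a, rho) are pairwise
   rho-separated for rho <= r/3; taking rho the smaller of r/3 and
   |dOm|^(1/(n-1))/2, Ahlfors regularity and the additivity of H^(n-1) on
   separated sets give #u kappa rho^(n-1) <= |dOm|, that is
   #u kappa <= (3/r)^(n-1) |dOm| + 2^(n-1). *)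

From HB Require Import structures.
From mathcomp Require Import all_boot all_order all_algebra.
From mathcomp Require Import all_classical all_reals all_analysis finmap.
From mathcomp Require Import ring lra zify.
Import Order.TTheory GRing.Theory Num.Theory.
Import numFieldNormedType.Exports.
Local Open Scope classical_set_scope.
Local Open Scope ring_scope.
Set Implicit Arguments.
Unset Strict Implicit.

Section EuclideanNorm.
Variables (R : realType) (n : nat).
Implicit Types x y z : 'cV[R]_n.

Lemma enorm_ge0 x : 0 <= enorm x.
Proof. exact: sqrtr_ge0. Qed.

Lemma sqr_enorm x : enorm x ^+ 2 = \sum_(i < n) x i ord0 ^+ 2.
Proof. by rewrite sqr_sqrtr // sumr_ge0 // => i _; exact: sqr_ge0. Qed.

Lemma enorm0 : enorm (0 : 'cV[R]_n) = 0.
Proof. by rewrite /enorm big1 ?sqrtr0 // => i _; rewrite mxE expr0n. Qed.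

Lemma enormN x : enorm (- x) = enorm x.
Proof. by rewrite /enorm; under eq_bigr do rewrite mxE sqrrN. Qed.

Lemma enorm_subC x y : enorm (x - y) = enorm (y - x).
Proof. by rewrite -enormN opprB. Qed.

Lemma ler_coord_enorm x i : `|x i ord0| <= enorm x.
Proof.
rewrite -(@ler_pXn2r _ 2) ?nnegrE ?enorm_ge0 // sqr_enorm real_normK ?num_real //.
by rewrite (bigD1 i) //= lerDl sumr_ge0 // => j _; exact: sqr_ge0.
Qed.

Lemma sqr_sum_mul_le x y :
  (\sum_(i < n) x i ord0 * y i ord0) ^+ 2
    <= (\sum_(i < n) x i ord0 ^+ 2) * (\sum_(i < n) y i ord0 ^+ 2).
Proof.
pose a i := x i ord0; pose b i := y i ord0.
have double_sum (f g : 'I_n -> R) :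
    (\sum_i f i) * (\sum_j g j) = \sum_i \sum_j f i * g j.
  by rewrite mulr_suml; apply: eq_bigr => i _; rewrite mulr_sumr.
rewrite -(@ler_pM2l _ 2) // expr2 !double_sum.
rewrite [in X in _ <= X]mulr_natl [in X in _ <= X]mulr2n.
rewrite [X in _ <= _ + X]exchange_big -big_split /= mulr_sumr.
apply: ler_sum => i _; rewrite mulr_sumr -big_split /=; apply: ler_sum => j _.
(* Lagrange: the difference is [(a_i b_j - a_j b_i)^2]. *)
have := sqr_ge0 (a i * b j - a j * b i); rewrite /a /b; nra.
Qed.

Lemma sum_mul_le_enorm x y :
  \sum_(i < n) x i ord0 * y i ord0 <= enorm x * enorm y.
Proof.
apply: le_trans (ler_norm _) _.
rewrite -(@ler_pXn2r _ 2) ?nnegrE ?mulr_ge0 ?enorm_ge0 //.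
by rewrite real_normK ?num_real // exprMn !sqr_enorm sqr_sum_mul_le.
Qed.

Lemma ler_enormD x y : enorm (x + y) <= enorm x + enorm y.
Proof.
rewrite -(@ler_pXn2r _ 2) ?nnegrE ?addr_ge0 ?enorm_ge0 // sqr_enorm.
have -> : \sum_(i < n) (x + y) i ord0 ^+ 2 = \sum_(i < n) x i ord0 ^+ 2
    + \sum_(i < n) y i ord0 ^+ 2 + 2 * \sum_(i < n) x i ord0 * y i ord0.
  by rewrite mulr_sumr -!big_split /=; apply: eq_bigr => i _; rewrite mxE; ring.
by rewrite -!sqr_enorm; have := sum_mul_le_enorm x y; nra.
Qed.

Lemma ler_edistD x y z : enorm (x - z) <= enorm (x - y) + enorm (y - z).
Proof. by rewrite -[x - z](subrKA y); exact: ler_enormD. Qed.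

End EuclideanNorm.

Section LatticePointsInBalls.
Variables (R : realType) (n : nat) (M : 'M[R]_n).
Hypothesis hM : M \in unitmx.

Definition lattice_coord (x : 'cV[R]_n) : 'cV[int]_n :=
  map_mx Num.floor (invmx M *m x).

Lemma lattice_coordK x : lattice M x ->
  map_mx (fun z : int => z%:~R) (lattice_coord x) = invmx M *m x.
Proof.
case=> k ->; rewrite /lattice_coord mulKmx //.
by apply/matrixP => i j; rewrite !mxE intrKfloor.
Qed.

Lemma lattice_coord_inj x y : lattice M x -> lattice M y ->
  lattice_coord x = lattice_coord y -> x = y.
Proof.
by move=> Lx Ly kxy; apply: (can_inj (mulKVmx hM)); rewrite -!lattice_coordK // kxy.
Qed.

Lemma lattice_coord_dist x y i : lattice M x -> lattice M y ->
  `|(lattice_coord x i ord0 - lattice_coord y i ord0)%:~R|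
    <= (\sum_(k < n) \sum_(l < n) `|invmx M k l|) * enorm (x - y).
Proof.
move=> Lx Ly; rewrite intrB.
have coordE z : lattice M z -> (lattice_coord z i ord0)%:~R = (invmx M *m z) i ord0.
  by move=> Lz; rewrite -lattice_coordK // [RHS]mxE.
rewrite !coordE //.
have -> : (invmx M *m x) i ord0 - (invmx M *m y) i ord0 = (invmx M *m (x - y)) i ord0.
  by rewrite mulmxBr !mxE.
rewrite mxE; apply: le_trans (ler_norm_sum _ _ _) _.
apply: le_trans (_ : \sum_l `|invmx M i l| * enorm (x - y) <= _).
  apply: ler_sum => l _; rewrite normrM ler_wpM2l //; exact: ler_coord_enorm.
rewrite -mulr_suml ler_wpM2r ?enorm_ge0 // [leRHS](bigD1 i) //= lerDl.
by apply: sumr_ge0 => k _; apply: sumr_ge0.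
Qed.

Lemma lattice_ball_size_bounded (rho : R) : exists K : nat,
  forall z (s : seq 'cV[R]_n), uniq s ->
    (forall x, x \in s -> lattice M x /\ enorm (x - z) < rho) -> (size s <= K)%N.
Proof.
pose c : R := \sum_(k < n) \sum_(l < n) `|invmx M k l|.
have c_ge0 : 0 <= c by apply: sumr_ge0 => k _; apply: sumr_ge0.
pose N := Num.Def.archi_bound (c * (2 * `|rho|)).
have cN : c * (2 * `|rho|) <= N%:R by apply/ltW/archi_boundP; rewrite !mulr_ge0.
exists #|{ffun 'I_n -> 'I_(N + N).+1}| => z [//|x0 s'] s_uniq s_ball.
set s := x0 :: s' in s_uniq s_ball *.
have [Lx0 x0z] := s_ball x0 (mem_head _ _).
have coord_close x i : x \in s ->
    0 <= lattice_coord x i ord0 - lattice_coord x0 i ord0 + N%:Z <= (N + N)%:Z.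
  move=> /s_ball[Lx xz].
  have : `|lattice_coord x i ord0 - lattice_coord x0 i ord0| <= N%:Z.
    rewrite -(ler_int R) intr_norm; apply: le_trans (lattice_coord_dist i Lx Lx0) _.
    apply: le_trans cN; rewrite ler_wpM2l //.
    have := ler_edistD x z x0; rewrite [enorm (z - x0)]enorm_subC.
    have := ler_norm rho; lra.
  by rewrite ler_norml => /andP[? ?]; apply/andP; split; lia.
pose code x : {ffun 'I_n -> 'I_(N + N).+1} :=
  [ffun i => inord (absz (lattice_coord x i ord0 - lattice_coord x0 i ord0 + N%:Z))].
have code_inj : {in s &, injective code}.
  move=> x y xs ys /ffunP code_xy.
  have [[Lx _] [Ly _]] := (s_ball x xs, s_ball y ys).
  apply: lattice_coord_inj => //; apply/colP => i.
  change (lattice_coord x i ord0 = lattice_coord y i ord0).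
  move: (code_xy i); rewrite !ffunE => /(congr1 (@nat_of_ord _)).
  have /andP[? ?] := coord_close x i xs; have /andP[? ?] := coord_close y i ys.
  by rewrite !inordK; lia.
rewrite -(size_map code) cardE; apply: uniq_leq_size => [|v _].
  by rewrite map_inj_in_uniq.
by rewrite mem_enum.
Qed.

End LatticePointsInBalls.

Lemma greedy_sparse_subseq (T : eqType) (Q : pred T) (near : rel T) (K : nat) :
    reflexive near -> symmetric near ->
    (forall t s, uniq s -> all Q s -> all (near t) s -> (size s <= K)%N) ->
  forall s, uniq s -> all Q s -> exists u : seq T,
    [/\ uniq u, {subset u <= s},
        {in u &, forall a b, a != b -> ~~ near a b} & (size s <= K * size u)%N].
Proof.
move=> near_refl near_sym near_bounded s.
elim: {s}(size s).+1 {-2}s (ltnSn (size s)) => // m IH [_ _ _|t s'].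
  by exists [::].
set s := t :: s' => s_small s_uniq sQ.
set far := seq.filter (predC (near t)) s.
have t_far : t \notin far by rewrite mem_filter /= near_refl.
have far_sub : {subset far <= s} by move=> x; rewrite mem_filter => /andP[].
have far_small : (size far < m)%N.
  suff : (size far < size s)%N by move: s_small; lia.
  by rewrite size_filter /= near_refl add0n ltnS count_size.
have farQ : all Q far by apply/allP => x /far_sub; exact: (allP sQ).
have [u [u_uniq u_sub u_sparse u_size]] :=
  IH far far_small (filter_uniq _ s_uniq) farQ.
exists (t :: u); split.
- by rewrite /= u_uniq andbT; apply: contra t_far; exact: u_sub.
- by move=> x; rewrite inE => /predU1P[-> | /u_sub /far_sub]; rewrite ?mem_head.
- have far_t x : x \in u -> ~~ near t x by move=> /u_sub; rewrite mem_filter => /andP[].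
  move=> a b; rewrite !inE => /predU1P[-> | au] /predU1P[-> | bu]; rewrite ?eqxx //.
  + by move=> _; exact: far_t.
  + by move=> _; rewrite near_sym; exact: far_t.
  + exact: u_sparse.
- rewrite -(count_predC (near t)) -!size_filter mulnS leq_add //.
  apply: near_bounded; [exact: filter_uniq | | exact: filter_all].
  by apply/allP => x; rewrite mem_filter => /andP[_ /(allP sQ)].
Qed.

Section HausdorffSeparated.
Variables (R : realType) (n : nat).
Implicit Types (s : nat) (X : set 'cV[R]_n).

Definition cover_cost s X : \bar R :=
  (unit_ball_vol R s * (fine (ediam X) / 2) ^+ s)%:E.

Lemma ediam_ge0 X : (0 <= ediam X)%E.
Proof. by apply: ereal_sup_ubound; left. Qed.

Lemma enorm_le_ediam X x y : X x -> X y -> ((enorm (x - y))%:E <= ediam X)%E.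
Proof. by move=> Xx Xy; apply: ereal_sup_ubound; right; exists x => //; exists y. Qed.

Lemma ediam_set0 : ediam (set0 : set 'cV[R]_n) = 0%E.
Proof.
apply/le_anti; rewrite ediam_ge0 andbT.
by apply: ge_ereal_sup => _ [-> | [x []]].
Qed.

Lemma unit_ball_vol_ge0 k : 0 <= unit_ball_vol R k.
Proof.
suff : 0 <= unit_ball_vol R k /\ 0 <= unit_ball_vol R k.+1 by case.
elim: k => [|k [IH1 IH2]]; first by split.
by split=> //=; rewrite mulr_ge0 ?divr_ge0 ?mulr_ge0 ?pi_ge0.
Qed.

Lemma cover_cost_ge0 s X : (0 <= cover_cost s X)%E.
Proof.
rewrite lee_fin mulr_ge0 ?unit_ball_vol_ge0 // exprn_ge0 // divr_ge0 //.
exact/fine_ge0/ediam_ge0.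
Qed.

Lemma cover_cost_set0 s : (0 < s)%N -> cover_cost s set0 = 0%E.
Proof.
by move=> s_gt0; rewrite /cover_cost ediam_set0 /= mul0r expr0n gtn_eqF // mulr0.
Qed.

Lemma le_hausdorff_delta s d1 d2 X : d1 <= d2 ->
  (hausdorff_delta s d2 X <= hausdorff_delta s d1 X)%E.
Proof.
move=> d12; apply: ereal_inf_le_tmp => _ [E [XE Ed1] <-]; exists E => //.
by split=> // i; apply: le_trans (Ed1 i) _; rewrite lee_fin.
Qed.

Lemma hausdorff_delta_le_hausdorff s d X : 0 < d ->
  (hausdorff_delta s d X <= hausdorff s X)%E.
Proof. by move=> d_gt0; apply: ereal_sup_ubound; exists d. Qed.

Section SeparatedFamily.
Variables (s : nat) (N : nat) (A : 'I_N -> set 'cV[R]_n) (B : set 'cV[R]_n).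
Variable eta : R.
Hypothesis s_gt0 : (0 < s)%N.
Hypothesis AB : forall j, A j `<=` B.
Hypothesis A_sep : forall j k a b, j != k -> A j a -> A k b -> eta <= enorm (a - b).

(* A covering set of diameter [< eta] meets at most one [A j], so each cover
   of [B] splits into covers of the [A j] of no larger total cost. *)
Lemma hausdorff_delta_separated_sum_le d : d < eta ->
  (\sum_(j < N) hausdorff_delta s d (A j) <= hausdorff_delta s d B)%E.
Proof.
move=> d_lt_eta; apply: le_ereal_inf_tmp => _ [E [BE Ed] <-].
pose Ej j i := if `[< exists a, A j a /\ E i a >] then E i else set0.
have cover_Aj j :
    (hausdorff_delta s d (A j) <= \sum_(0 <= i <oo) cover_cost s (Ej j i))%E.
  apply: ereal_inf_lbound; exists (Ej j) => //; split.
    move=> a Aa; have [i _ Eia] := BE a (AB Aa).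
    by exists i => //; rewrite /Ej asboolT //; exists a.
  move=> i; rewrite /Ej; case: asboolP => _; first exact: Ed.
  by rewrite ediam_set0 (le_trans (ediam_ge0 _) (Ed i)).
apply: le_trans (lee_sum _ (fun j _ => cover_Aj j)) _.
rewrite -nneseries_sum; last by move=> j i _; exact: cover_cost_ge0.
apply: lee_nneseries => [i _ _ | i _].
  by apply: sume_ge0 => j _; exact: cover_cost_ge0.
have [[j0 [a [Aa Ea]]] | E_misses] := pselect (exists j a, A j a /\ E i a).
  rewrite (bigD1 j0) //= big1 ?adde0; first by rewrite /Ej asboolT //; exists a.
  move=> j jj0; rewrite /Ej asboolF ?cover_cost_set0 // => -[b [Ab Eb]].
  have := le_trans (enorm_le_ediam Eb Ea) (Ed i); rewrite lee_fin => ab_le_d.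
  have := lt_le_trans (le_lt_trans ab_le_d d_lt_eta) (A_sep jj0 Ab Aa).
  by rewrite ltxx.
rewrite big1; first exact: cover_cost_ge0.
move=> j _; rewrite /Ej asboolF ?cover_cost_set0 // => -[a aE].
by apply: E_misses; exists j, a.
Qed.

Lemma hausdorff_separated_ge c : 0 < eta ->
    (forall j, (c%:E <= hausdorff s (A j))%E) ->
  ((N%:R * c)%:E <= hausdorff s B)%E.
Proof.
move=> eta_gt0 Ac; apply/lee_addgt0Pr => e e_gt0.
set eps := e / (N%:R + 1).
have eps_gt0 : 0 < eps by rewrite divr_gt0 // ltr_wpDl.
have delta_j j : exists dj : R, 0 < dj /\ ((c - eps)%:E < hausdorff_delta s dj (A j))%E.
  have : ((c - eps)%:E < hausdorff s (A j))%E.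
    by apply: lt_le_trans (Ac j); rewrite lte_fin ltrBlDr ltrDl.
  by move=> /ereal_sup_gt [_ [dj dj_gt0 <-] h]; exists dj.
have [dj Hdj] := choice delta_j.
set del := \big[Order.min/(eta / 2)]_(j < N) dj j.
have del_gt0 : 0 < del.
  apply/bigmin_gtP; split; first by rewrite divr_gt0.
  by move=> j _; case: (Hdj j).
have del_lt_eta : del < eta.
  by apply: le_lt_trans (bigmin_le_id _ _ _ _) _; rewrite ltr_pdivrMr //; lra.
have sum_le : ((N%:R * (c - eps))%:E <= hausdorff s B)%E.
  apply: le_trans (hausdorff_delta_le_hausdorff _ _ del_gt0).
  apply: le_trans (hausdorff_delta_separated_sum_le del_lt_eta).
  have -> : (N%:R * (c - eps))%:E = (\sum_(j < N) (c - eps)%:E)%E.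
    by rewrite sumEFin sumr_const card_ord mulr_natl.
  apply: lee_sum => j _; apply: ltW; apply: lt_le_trans (proj2 (Hdj j)) _.
  by apply: le_hausdorff_delta; apply: bigmin_le.
apply: le_trans (leeD2r _ sum_le); rewrite -EFinD lee_fin.
have : N%:R * eps <= e by rewrite /eps mulrA ler_pdivrMr ?ltr_wpDl //; nra.
lra.
Qed.

End SeparatedFamily.

End HausdorffSeparated.

Section SeparatedPointsNearBoundary.
Variables (R : realType) (n : nat) (Om : set 'cV[R]_n) (kappa H r : R).
Hypothesis n_gt1 : (0 < n.-1)%N.
Hypothesis OmH : bdry_measure Om = H%:E.
Hypothesis Om_ahlfors : max_ahlfors_regular Om kappa.
Variable u : seq 'cV[R]_n.
Hypothesis u_uniq : uniq u.
Hypothesis u_near : forall a, a \in u -> exists2 y, bdry Om y & enorm (a - y) < r.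
Hypothesis u_sep : {in u &, forall a b, a != b -> 3 * r <= enorm (a - b)}.

Lemma separated_near_bdry_size_le rho : 0 < rho -> rho <= r / 3 ->
    rho < H `^ (n.-1%:R)^-1 ->
  (size u)%:R * (kappa * rho ^+ n.-1) <= H.
Proof.
move=> rho_gt0 rho_le rho_lt.
pose pt (j : 'I_(size u)) := nth 0 u j.
have pt_u j : pt j \in u by exact: mem_nth.
have y_ex j : exists yj, bdry Om yj /\ enorm (pt j - yj) < r.
  by have [yj ? ?] := u_near (pt_u j); exists yj.
have [y y_near] := choice y_ex.
pose A j := bdry Om `&` eball (y j) rho.
rewrite -lee_fin -OmH; apply: (@hausdorff_separated_ge _ _ _ _ A _ rho) => //.
- by move=> j x [].
- move=> j k a b jk [_ Aa] [_ Ab]; rewrite /eball /= in Aa Ab.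
  have := u_sep (pt_u j) (pt_u k); rewrite nth_uniq // => /(_ jk) pt_sep.
  have [[_ yj] [_ yk]] := (y_near j, y_near k).
  have := ler_edistD (pt j) (y j) (pt k); have := ler_edistD (y j) a (pt k).
  have := ler_edistD a b (pt k); have := ler_edistD b (y k) (pt k).
  rewrite [enorm (y j - a)]enorm_subC [enorm (y k - pt k)]enorm_subC; lra.
- move=> j; apply: Om_ahlfors => //; first by case: (y_near j).
  by rewrite OmH poweR_EFin lte_fin.
Qed.

Lemma separated_near_bdry_size_bound : 0 < r -> 0 < H ->
  (size u)%:R * kappa <= (3 / r) ^+ n.-1 * H + 2 ^+ n.-1.
Proof.
move=> r_gt0 H_gt0; set m := n.-1; set q := H `^ m%:R^-1.
have q_gt0 : 0 < q by rewrite powR_gt0.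
have qm : q ^+ m = H.
  rewrite /q -powR_mulrn ?powR_ge0 // -powRrM mulVf ?powRr1 ?ltW //.
  by rewrite pnatr_eq0 -lt0n.
have C_ge0 : 0 <= (3 / r) ^+ m * H by rewrite mulr_ge0 ?exprn_ge0 ?divr_ge0 ?ltW.
have [q_large | q_small] := leP (r / 3) (q / 2).
  have r3_lt_q : r / 3 < q by lra.
  have := separated_near_bdry_size_le (divr_gt0 r_gt0 (ltr0Sn _ 2)) (lexx _) r3_lt_q.
  rewrite mulrA -ler_pdivlMr ?exprn_gt0 ?divr_gt0 // -exprVn invf_div.
  by move=> /le_trans; apply; rewrite mulrC lerDl exprn_ge0.
have q2_lt_q : q / 2 < q by lra.
have := separated_near_bdry_size_le (divr_gt0 q_gt0 (ltr0Sn _ 1)) (ltW q_small) q2_lt_q.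
rewrite expr_div_n qm !mulrA ler_pdivrMr ?exprn_gt0 // [H * _]mulrC ler_pM2r //.
by move=> /le_trans; apply; rewrite lerDr.
Qed.

End SeparatedPointsNearBoundary.

Lemma counting_le_of_seq (T : choiceType) (R : realType) (A : set T) (b : R) :
    (forall s : seq T, uniq s -> (forall x, x \in s -> A x) -> (size s)%:R <= b) ->
  (counting A <= b%:E)%E.
Proof.
move=> size_le; rewrite /counting; case: asboolP => [A_fin | A_inf].
  rewrite lee_fin; apply: size_le; first exact: fset_uniq.
  by move=> x; rewrite in_fset_set // => /set_mem.
exfalso; have [B BA B_large] := infinite_set_fset (Num.Def.archi_bound `|b|) A_inf.
have := size_le B (fset_uniq B) BA; have := archi_boundP (normr_ge0 b).
have : (Num.Def.archi_bound `|b|)%:R <= #|` B|%:R :> R by rewrite ler_nat.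
have := ler_norm b; lra.
Qed.

Section BoundaryLatticePoints.
Variables (R : realType) (n : nat) (M : 'M[R]_n) (r : R) (K : nat).
Hypothesis r_gt0 : 0 < r.
Hypothesis lattice_ball_le : forall z s, uniq s ->
  (forall x, x \in s -> lattice M x /\ enorm (x - z) < 3 * r) -> (size s <= K)%N.
Variables (Om : set 'cV[R]_n) (kappa H : R).
Hypothesis n_gt1 : (0 < n.-1)%N.
Hypothesis kappa_gt0 : 0 < kappa.
Hypothesis H_gt0 : 0 < H.
Hypothesis OmH : bdry_measure Om = H%:E.
Hypothesis Om_ahlfors : max_ahlfors_regular Om kappa.

Lemma bdry_lattice_pts_size_le s : uniq s ->
    (forall x, x \in s -> bdry_lattice_pts M r Om x) ->
  (size s)%:R * kappa <= K%:R * ((3 / r) ^+ n.-1 * H + 2 ^+ n.-1).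
Proof.
move=> s_uniq s_pts.
pose near : rel 'cV[R]_n := fun a b => enorm (a - b) < 3 * r.
have near_refl : reflexive near by move=> a; rewrite /near subrr enorm0 mulr_gt0.
have near_sym : symmetric near by move=> a b; rewrite /near enorm_subC.
have sL : all (fun x => `[< lattice M x >]) s.
  by apply/allP => x /s_pts[Lx _]; exact/asboolP.
have near_le t s' : uniq s' -> all (fun x => `[< lattice M x >]) s' ->
    all (near t) s' -> (size s' <= K)%N.
  move=> s'_uniq s'L s'_near; apply: (@lattice_ball_le t) => // x xs'.
  by split; [exact/asboolP/(allP s'L) | rewrite enorm_subC; exact: (allP s'_near)].
have [u [u_uniq u_sub u_sparse s_u]] :=
  greedy_sparse_subseq near_refl near_sym near_le s_uniq sL.
have u_near a : a \in u -> exists2 y, bdry Om y & enorm (a - y) < r.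
  by move=> /u_sub /s_pts[_ [y Oy]]; rewrite /eball /= subr0; exists y.
have u_sep : {in u &, forall a b, a != b -> 3 * r <= enorm (a - b)}.
  by move=> a b au bu ab; rewrite leNgt u_sparse.
apply: (@le_trans _ _ (K%:R * ((size u)%:R * kappa))).
  by rewrite mulrA -natrM ler_wpM2r ?(ltW kappa_gt0) // ler_nat.
rewrite ler_wpM2l //.
exact: (separated_near_bdry_size_bound n_gt1 OmH Om_ahlfors
  u_uniq u_near u_sep r_gt0 H_gt0).
Qed.

End BoundaryLatticePoints.

Unset Implicit Arguments.

Theorem proposition2p4 (R : realType) (d : nat) (hd : (1 <= d)%N)
    (M : 'M[R]_(2 * d)) (hM : M \in unitmx) (r : R) (hr : 0 < r) :
  exists C D : R, forall (Om : set 'cV[R]_(2 * d)) (kappa : R),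
    compact Om -> 0 < kappa ->
    (0 < bdry_measure Om)%E -> (bdry_measure Om < +oo)%E ->
    max_ahlfors_regular Om kappa ->
    (counting (bdry_lattice_pts M r Om)
      <= (C * (fine (bdry_measure Om) / kappa)
            * (1 + D / fine (bdry_measure Om)))%:E)%E.
Proof.
have n_gt1 : (0 < (2 * d).-1)%N by lia.
have [K lattice_ball_le] := lattice_ball_size_bounded hM (3 * r).
set m := (2 * d).-1; set C0 : R := (3 / r) ^+ m.
have C0_gt0 : 0 < C0 by rewrite exprn_gt0 // divr_gt0.
exists (K%:R * C0), (2 ^+ m / C0) => Om kappa _ kappa_gt0 Om_gt0 Om_fin Om_ahlfors.
set H := fine (bdry_measure Om).
have OmH : bdry_measure Om = H%:E by rewrite fineK // ge0_fin_numE // ltW.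
have H_gt0 : 0 < H by rewrite -lte_fin -OmH.
have -> : K%:R * C0 * (H / kappa) * (1 + 2 ^+ m / C0 / H)
    = K%:R * (C0 * H + 2 ^+ m) / kappa.
  by field; rewrite !gt_eqF ?kappa_gt0 ?H_gt0 ?C0_gt0.
apply: counting_le_of_seq => s s_uniq s_pts; rewrite ler_pdivlMr //.
exact: (bdry_lattice_pts_size_le hr lattice_ball_le n_gt1 kappa_gt0 H_gt0 OmH
  Om_ahlfors s_uniq s_pts).
Qed.
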